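(* Let $1\le l,m\le n$ with $l+m>n$, and set $s=l+m-n$, $r=n-l+1$. Let $a=(a_{ij})$ be an $m\times n$ matrix, $b=(b_{ij})$ an $n\times l$ matrix, and $c=ab$ (an $m\times l$ matrix), over a commutative ring containing $\mathbb Q$. Then $$\det\big(a_{ij}\big)_{1\le i,j\le m}\cdot\det\big(b_{ij}\big)_{r\le i\le n,\,1\le j\le l}=\frac{1}{s!}\sum_{\sigma\in S_m}\sum_{\tau\in S_l}\operatorname{sgn}(\sigma)\operatorname{sgn}(\tau)\prod_{k=1}^{r-1}a_{\sigma(k),k}\prod_{t=1}^{l-s}b_{m+t,\tau(s+t)}\prod_{u=1}^{s}c_{\sigma(r-1+u),\tau(u)}.$$ In particular, for $W=lV\oplus mV^*$, the product of the left minor of order $m$ of $\overline{V^*}$ (columns $1,\dots,m$) and the lower minor of order $l$ of $\overline V$ (rows $r,\dots,n$) is expressed as a polynomial in left minors of order $m-s$ of $\overline{V^*}$, lower minors of order $l-s$ of $\overline V$, and entries of $\overline{V^*}\,\overline V$.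
   Context: $S_m$ is the symmetric group on $\{1,\dots,m\}$. $\overline V$ is the $n\times l$ matrix of coordinate functions on $lV$, $\overline{V^*}$ the $m\times n$ matrix of coordinate functions on $mV^*$ (with $a=\overline{V^*}$, $b=\overline V$ in the application). A left minor uses the first columns, a lower minor uses the last rows. *)

From HB Require Import structures.
From mathcomp Require Import all_boot all_order all_algebra all_fingroup.
Set Implicit Arguments. Unset Strict Implicit. Unset Printing Implicit Defensive.
Import GRing.Theory.
Local Open Scope ring_scope.

(* Entry (i, j) of a matrix, with 0-based natural-number indices;
   0 outside the range (never used out of range in the statement). *)
Definition ent (R : Type) (z : R) (p q : nat) (A : 'M[R]_(p, q)) (i j : nat) : R :=
  match @insub _ (fun k => k < p)%N 'I_p i, @insub _ (fun k => k < q)%N 'I_q j with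
  | Some i', Some j' => A i' j'
  | _, _ => z
  end.

Notation "A `[ i , j ]" := (ent 0 A i j) (at level 10, format "A `[ i ,  j ]").

(* Action of a permutation of 'I_m on a 0-based natural index
   (identity outside the range). *)
Definition pact (m : nat) (s : 'S_m) (k : nat) : nat :=
  match @insub _ (fun x => x < m)%N 'I_m k with
  | Some k' => val (s k')
  | None => k
  end.

(* Write n = p + s + q, m = p + s, l = s + q (so p = r - 1).  Expanding every
   entry c_{x,y} = \sum_j a_{x,j} b_{j,y} turns the double sum over S_m x S_l
   into a sum over maps k : [0, s) -> [0, n) of the product of two determinants:
   that of a restricted to its first p columns followed by the columns k, and
   that of b restricted to the rows k followed by its last q rows.  The first
   vanishes unless k is injective and avoids the first p columns, the second
   unless k avoids the last q rows; hence only k = p + pi with pi in S_s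
   survive, each contributing sgn(pi)^2 times the product of the two minors of
   the theorem, and the sum is s! times that product. *)

From mathcomp Require Import all_boot all_order all_algebra all_fingroup.
From mathcomp Require Import zify ring.
Set Implicit Arguments.
Unset Strict Implicit.
Unset Printing Implicit Defensive.
Import GRing.Theory.
Local Open Scope ring_scope.

Lemma entE (R : Type) (z : R) p q (A : 'M[R]_(p, q))
    (i : 'I_p) (j : 'I_q) (i' j' : nat) :
  i' = i -> j' = j -> ent z A i' j' = A i j.
Proof.
move=> -> ->; rewrite /ent; case: insubP => [i0 _ /val_inj ->|]; last by rewrite ltn_ord.
by case: insubP => [j0 _ /val_inj ->|]; last by rewrite ltn_ord.
Qed.

Lemma pactE m (s : 'S_m) (i : 'I_m) (k : nat) : k = i -> pact s k = s i.
Proof.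
by move=> ->; rewrite /pact; case: insubP => [i' _ /val_inj ->|]; last by rewrite ltn_ord.
Qed.

Lemma det_row_mx_col_perm (R : comPzRingType) n1 n2 (A : 'M[R]_(n1 + n2, n1))
    (B : 'M[R]_(n1 + n2, n2)) (pi : 'S_n2) :
  \det (row_mx A (col_perm pi B)) = (-1) ^+ pi * \det (row_mx A B).
Proof.
have -> : row_mx A (col_perm pi B) = row_mx A B *m block_mx 1%:M 0 0 (perm_mx pi^-1).
  by rewrite mul_row_block !mulmx0 !mulmx1 addr0 add0r col_permE.
by rewrite det_mulmx det_ublock det1 mul1r det_perm odd_permV mulrC.
Qed.

Lemma det_col_mx_row_perm (R : comPzRingType) n1 n2 (U : 'M[R]_(n1, n1 + n2))
    (D : 'M[R]_(n2, n1 + n2)) (pi : 'S_n1) :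
  \det (col_mx (row_perm pi U) D) = (-1) ^+ pi * \det (col_mx U D).
Proof.
have -> : col_mx (row_perm pi U) D = block_mx (perm_mx pi) 0 0 1%:M *m col_mx U D.
  by rewrite mul_block_col !mul0mx !mul1mx addr0 add0r row_permE.
by rewrite det_mulmx det_ublock det1 mulr1 det_perm.
Qed.

Lemma det_eq0_col (R : comPzRingType) n (M : 'M[R]_n) j1 j2 :
  j1 != j2 -> (forall i, M i j1 = M i j2) -> \det M = 0.
Proof. by move=> ne eqM; rewrite -det_tr (determinant_alternate ne) // => i; rewrite !mxE. Qed.

Section MixedMinors.

Variables (R : comPzRingType) (p s q : nat).
Variables (a : 'M[R]_(p + s, p + s + q)) (b : 'M[R]_(p + s + q, s + q)).

Implicit Types (k : 'I_s -> 'I_(p + s + q)) (pi : 'S_s).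

Definition mid (u : 'I_s) : 'I_(p + s + q) := lshift q (rshift p u).

Definition a_minor k : 'M[R]_(p + s) :=
  row_mx (lsubmx (lsubmx a)) (colsub k a).

Definition b_minor k : 'M[R]_(s + q) :=
  col_mx (rowsub k b) (dsubmx b).

Lemma det_a_minor k : \det (a_minor k) =
  \sum_(sigma : 'S_(p + s)) (-1) ^+ sigma *
    (\prod_(i < p) a (sigma (lshift s i)) (lshift q (lshift s i))) *
    \prod_(u < s) a (sigma (rshift p u)) (k u).
Proof.
rewrite -det_tr; apply: eq_bigr => sigma _; rewrite big_split_ord /= mulrA.
by congr (_ * _ * _); apply: eq_bigr => i _; rewrite mxE ?row_mxEl ?row_mxEr !mxE.
Qed.

Lemma det_b_minor k : \det (b_minor k) =
  \sum_(tau : 'S_(s + q)) (-1) ^+ tau *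
    (\prod_(u < s) b (k u) (tau (lshift q u))) *
    \prod_(t < q) b (rshift (p + s) t) (tau (rshift s t)).
Proof.
apply: eq_bigr => tau _; rewrite big_split_ord /= mulrA.
by congr (_ * _ * _); apply: eq_bigr => i _; rewrite ?col_mxEu ?col_mxEd !mxE.
Qed.

Lemma mid_inj : injective mid.
Proof. by move=> u1 u2 /lshift_inj /rshift_inj. Qed.

Lemma det_a_minor_low k u : (k u < p)%N -> \det (a_minor k) = 0.
Proof.
move=> lt_ku_p.
apply: (@det_eq0_col _ _ _ (lshift s (Ordinal lt_ku_p)) (rshift p u)).
  by rewrite -val_eqE /=; lia.
by move=> i; rewrite row_mxEl row_mxEr !mxE; congr (a _ _); apply: val_inj.
Qed.

Lemma det_a_minor_dup k u1 u2 :
  u1 != u2 -> k u1 = k u2 -> \det (a_minor k) = 0.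
Proof.
move=> neq_u eq_k; apply: (@det_eq0_col _ _ _ (rshift p u1) (rshift p u2)).
  by rewrite (inj_eq (@rshift_inj _ _)).
by move=> i; rewrite !row_mxEr !mxE eq_k.
Qed.

Lemma det_b_minor_high k u : (p + s <= k u)%N -> \det (b_minor k) = 0.
Proof.
move=> le_ps_ku; have lt_q : (k u - (p + s) < q)%N by have := ltn_ord (k u); lia.
apply: (@determinant_alternate _ _ _ (lshift q u) (rshift s (Ordinal lt_q))).
  by rewrite -val_eqE /=; have := ltn_ord u; lia.
by move=> j; rewrite col_mxEu col_mxEd !mxE; congr (b _ _); apply: val_inj => /=; lia.
Qed.

Lemma exists_mid_perm k :
  (forall u, p <= k u < p + s)%N -> injective k -> exists pi : 'S_s, k =1 mid \o pi.
Proof.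
move=> k_mid k_inj; have lt_s u : (k u - p < s)%N by have := k_mid u; lia.
pose f u := Ordinal (lt_s u).
have f_inj : injective f.
  move=> u1 u2 /(congr1 val) /= eq_f; apply/k_inj/ord_inj.
  by have := k_mid u1; have := k_mid u2; lia.
by exists (perm f_inj) => u; apply: ord_inj; rewrite /= permE /=; have := k_mid u; lia.
Qed.

Lemma det_minors_eq0 k :
  (forall pi, ~ k =1 mid \o pi) -> \det (a_minor k) * \det (b_minor k) = 0.
Proof.
move=> k_not_mid.
have [u /det_a_minor_low -> | ge_p] := pickP (fun u => k u < p)%N; first by rewrite mul0r.
have [u /det_b_minor_high -> | lt_ps] := pickP (fun u => p + s <= k u)%N.
  by rewrite mulr0.
have [/injectiveP k_inj | /injectivePn [u1 [u2 neq_u /(det_a_minor_dup neq_u) ->]]] :=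
  boolP (injectiveb k); last by rewrite mul0r.
have k_mid u : (p <= k u < p + s)%N by move: (ge_p u) (lt_ps u) => /= /negbT + /negbT; lia.
by have [pi /k_not_mid] := exists_mid_perm k_mid k_inj.
Qed.

Lemma det_a_minor_mid k pi :
  k =1 mid \o pi -> \det (a_minor k) = (-1) ^+ pi * \det (lsubmx a).
Proof.
move=> k_pi; rewrite /a_minor; have -> : colsub k a = col_perm pi (rsubmx (lsubmx a)).
  by apply/matrixP => i u; rewrite !mxE k_pi.
by rewrite det_row_mx_col_perm hsubmxK.
Qed.

Lemma det_b_minor_mid k pi : k =1 mid \o pi ->
  \det (b_minor k) = (-1) ^+ pi * \det (col_mx (dsubmx (usubmx b)) (dsubmx b)).
Proof.
move=> k_pi; rewrite /b_minor; have -> : rowsub k b = row_perm pi (dsubmx (usubmx b)).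
  by apply/matrixP => u j; rewrite !mxE k_pi.
by rewrite det_col_mx_row_perm.
Qed.

Lemma sum_perm_mulmx_expand :
  \sum_(sigma : 'S_(p + s)) \sum_(tau : 'S_(s + q))
    ((-1) ^+ sigma * (-1) ^+ tau *
     (\prod_(i < p) a (sigma (lshift s i)) (lshift q (lshift s i))) *
     (\prod_(t < q) b (rshift (p + s) t) (tau (rshift s t))) *
     \prod_(u < s) (a *m b) (sigma (rshift p u)) (tau (lshift q u)))
  = \sum_(k : {ffun 'I_s -> 'I_(p + s + q)}) \det (a_minor k) * \det (b_minor k).
Proof.
symmetry; under eq_bigr => k _.
  rewrite det_a_minor det_b_minor mulr_suml.
  under eq_bigr => sigma _ do rewrite mulr_sumr.
  over.
rewrite exchange_big; apply: eq_bigr => sigma _.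
rewrite exchange_big; apply: eq_bigr => tau _.
under [X in _ = _ * X]eq_bigr => u _ do rewrite mxE.
rewrite bigA_distr_bigA mulr_sumr; apply: eq_bigr => k _; rewrite big_split /=.
(* [ring] does not terminate on the boolean exponents of the signs. *)
move: ((-1) ^+ sigma) ((-1) ^+ tau) => e1 e2; ring.
Qed.

Lemma sum_det_minors :
  \sum_(k : {ffun 'I_s -> 'I_(p + s + q)}) \det (a_minor k) * \det (b_minor k)
  = (\det (lsubmx a) * \det (col_mx (dsubmx (usubmx b)) (dsubmx b))) *+ s`!.
Proof.
pose mid_ffun (pi : 'S_s) := [ffun u => mid (pi u)].
rewrite (bigID (mem (mid_ffun @: setT))) /= [X in _ + X]big1 ?addr0; last first.
  move=> k /imsetP k_not_mid; apply: det_minors_eq0 => pi k_pi; apply: k_not_mid.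
  by exists pi => //; apply/ffunP => u; rewrite ffunE k_pi.
rewrite big_imset /=; last first.
  move=> pi1 pi2 _ _ /ffunP eq_mid; apply/permP => u; apply: mid_inj.
  by move: (eq_mid u); rewrite !ffunE.
rewrite -card_Sn -cardsT -sumr_const; apply: eq_bigr => pi _.
have mid_ffunE : mid_ffun pi =1 mid \o pi by move=> u; rewrite ffunE.
rewrite (det_a_minor_mid mid_ffunE) (det_b_minor_mid mid_ffunE).
by rewrite mulr_signM addbb mul1r.
Qed.

End MixedMinors.

(* Indices are 0-based: the paper's r - 1 is n - l. *)
Theorem mainTheorem15 (R : comAlgType rat) (n l m : nat)
  (hl : (1 <= l)%N) (hm : (1 <= m)%N) (hln : (l <= n)%N) (hmn : (m <= n)%N)
  (hlm : (n < l + m)%N)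
  (a : 'M[R]_(m, n)) (b : 'M[R]_(n, l)) :
  let s := (l + m - n)%N in
  let c := a *m b in
  \det (\matrix_(i < m, j < m) a`[i, j]) *
  \det (\matrix_(i < l, j < l) b`[n - l + i, j])%N
  = ((s`!%:R : rat)^-1) *:
    \sum_(sigma : 'S_m) \sum_(tau : 'S_l)
      ((-1) ^+ sigma * (-1) ^+ tau *
       (\prod_(k < n - l) a`[pact sigma k, k]) *
       (\prod_(t < l - s) b`[m + t, pact tau (s + t)]) *
       (\prod_(u < s) c`[pact sigma (n - l + u), pact tau u])).
Proof.
have [p [s [q [En Em El]]]] :
    exists p s q, [/\ n = (p + s + q)%N, m = (p + s)%N & l = (s + q)%N].
  by exists (n - l)%N, (l + m - n)%N, (n - m)%N; split; lia.
subst n m l.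
move=> s' c; rewrite /s' /c {s' c}.
have -> : (s + q + (p + s) - (p + s + q) = s)%N by lia.
have -> : (p + s + q - (s + q) = p)%N by lia.
have -> : (s + q - s = q)%N by lia.
have -> : \matrix_(i < p + s, j < p + s) a`[i, j] = lsubmx a.
  by apply/matrixP => i j; rewrite !mxE; apply: entE.
have -> : \matrix_(i < s + q, j < s + q) b`[p + i, j] = col_mx (dsubmx (usubmx b)) (dsubmx b).
  apply/matrixP => i j; rewrite mxE -[i](splitK i).
  by case: (split i) => u; rewrite ?col_mxEu ?col_mxEd !mxE; apply: entE => //=; rewrite addnA.
have fact_neq0 : (s`!%:R : rat) != 0 by rewrite Num.Theory.pnatr_eq0 -lt0n fact_gt0.
apply: (canRL (scalerK fact_neq0)); rewrite scaler_nat.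
rewrite -sum_det_minors -sum_perm_mulmx_expand.
apply: eq_bigr => sigma _; apply: eq_bigr => tau _.
by congr (_ * _ * _ * _ * _); apply: eq_bigr => i _; symmetry; apply: entE => //; apply: pactE.
Qed.
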